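(* (i) Let $W$ be a vector space, $c^1(z,w),\dots,c^r(z,w)$ $W$-valued vertex series, and $h_1,\dots,h_r\in\mathbb K$ with $h_i-h_j\notin\mathbb Z$ for $i\ne j$. If $\sum_{i=1}^rc^i(z,w)(z-w)^{h_i}=0$, then $c^i=0$ for all $i$. (ii) Let $c^1(\check z,\check w),\dots,c^r(\check z,\check w)$ be fields on $V$ and $\check h_1,\dots,\check h_r\in\mathbb K^2$ with $\check h_i-\check h_j\notin\mathbb Z^2$ for $i\ne j$. If $\sum_{i=1}^rc^i(\check z,\check w)(\check z-\check w)^{\check h_i}=0$, then $c^i=0$ for all $i$.
   Context: $\mathbb K$ is a field of characteristic $0$. For a vector space $W$, $W\{z,w\}$ denotes formal sums $\sum_{(n,m)\in\mathbb K^2}a_{n,m}z^{-n-1}w^{-m-1}$; a vertex series is an element of the $\mathbb K[z^{\mathbb K},w^{\mathbb K}]$-submodule generated by the power series $W[[z,w]]$ (finite sums of monomials $z^\alpha w^\beta$ times power series). For $h\in\mathbb K$, $(z-w)^h:=\sum_{i\in\mathbb N}(-1)^i\binom hi z^{h-i}w^i$. With $\check z=(z,\bar z)$, $\check w=(w,\bar w)$ and $\check h=(h,\bar h)$: $(\check z-\check w)^{\check h}:=(z-w)^h(\bar z-\bar w)^{\bar h}$. A field on $V$ is an $\mathrm{End}(V)$-valued formal distribution in $\check z,\check w$ (exponents in $\mathbb K$) whose value on every vector of $V$ is a vertex series. *)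

From HB Require Import structures.
From mathcomp Require Import all_boot all_order all_algebra.
From Stdlib Require Import ClassicalEpsilon.
Set Implicit Arguments. Unset Strict Implicit. Unset Printing Implicit Defensive.
Import Order.TTheory GRing.Theory Num.Theory.
Local Open Scope ring_scope.

Section Defs.
Variable K : fieldType.

(* ---------- formal series, indexed by exponents ----------
   A formal series in z,w with exponents in K is represented by its
   coefficient function: [f a b] is the coefficient of z^a w^b
   (i.e. a_{n,m} with a = -n-1, b = -m-1 in the paper's indexing). *)

Definition in_shift (alpha a : K) : Prop := exists n : nat, a = alpha + n%:R.

(* "infinite" sum of an eventually-zero family: the value of the
   eventually-stable partial sums (well defined in all uses below, since
   the families are finitely supported there). *)
Definition eventually_stable (W : lmodType K) (u : nat -> W) (v : W) : Prop :=
  exists N : nat, forall M : nat, (N <= M)%N -> \sum_(i < M) u i = v.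

Definition fsum (W : lmodType K) (u : nat -> W) : W :=
  epsilon (inhabits 0) (eventually_stable u).

Definition binomK (h : K) (i : nat) : K :=
  (\prod_(j < i) (h - j%:R)) / (i`!)%:R.

(* z^alpha w^beta times a W-valued power series: exactly the series
   supported in (alpha + N) x (beta + N) *)
Definition shifted_ps2 (W : lmodType K) (alpha beta : K) (g : K -> K -> W) :=
  forall a b, g a b <> 0 -> in_shift alpha a /\ in_shift beta b.

Definition vertex_series2 (W : lmodType K) (f : K -> K -> W) : Prop :=
  exists s : seq (K * K * (K -> K -> W)),
    (forall t, List.In t s -> shifted_ps2 t.1.1 t.1.2 t.2) /\
    (forall a b, f a b = \sum_(t <- s) t.2 a b).

(* c(z,w) * (z-w)^h, with (z-w)^h = sum_i (-1)^i binom(h,i) z^(h-i) w^i *)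
Definition mul_zw (W : lmodType K) (h : K) (c : K -> K -> W) : K -> K -> W :=
  fun a b => fsum (fun i : nat =>
     ((-1) ^+ i * binomK h i) *: c (a - h + i%:R) (b - i%:R)).

(* ---------- part (ii): variables z, zbar, w, wbar ----------
   [f a a' b b'] is the coefficient of z^a zbar^a' w^b wbar^b'. *)

Definition shifted_ps4 (V : lmodType K) (al al' be be' : K)
    (g : K -> K -> K -> K -> V) :=
  forall a a' b b', g a a' b b' <> 0 ->
    [/\ in_shift al a, in_shift al' a', in_shift be b & in_shift be' b'].

Definition vertex_series4 (V : lmodType K) (f : K -> K -> K -> K -> V) : Prop :=
  exists s : seq (K * K * K * K * (K -> K -> K -> K -> V)),
    (forall t, List.In t s ->
       shifted_ps4 t.1.1.1.1 t.1.1.1.2 t.1.1.2 t.1.2 t.2) /\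
    (forall a a' b b', f a a' b b' = \sum_(t <- s) t.2 a a' b b').

Definition is_field (V : lmodType K)
    (c : K -> K -> K -> K -> {linear V -> V}) : Prop :=
  forall v : V, vertex_series4 (fun a a' b b' => c a a' b b' v).

(* (c(zc,wc) (zc - wc)^hc) applied to v, with
   (zc-wc)^hc = (z-w)^h (zbar-wbar)^hbar *)
Definition mul_field_at (V : lmodType K) (h hb : K)
    (c : K -> K -> K -> K -> {linear V -> V}) (v : V) : K -> K -> K -> K -> V :=
  fun a a' b b' => fsum (fun i : nat => fsum (fun j : nat =>
     ((-1) ^+ i * binomK h i * ((-1) ^+ j * binomK hb j)) *:
       c (a - h + i%:R) (a' - hb + j%:R) (b - i%:R) (b' - j%:R) v)).

End Defs.

From HB Require Import structures.
From mathcomp Require Import all_boot all_order all_algebra.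
From mathcomp Require Import ring zify.
From Stdlib Require Import Classical ClassicalEpsilon.
Set Implicit Arguments. Unset Strict Implicit. Unset Printing Implicit Defensive.
Import Order.TTheory GRing.Theory Num.Theory.
Local Open Scope ring_scope.

(* Read along a diagonal of fixed total degree whose [w]-degree is bounded
   below, the product [c^i (z - w)^(h_i)] becomes the convolution of a finitely
   supported sequence with the coefficients of [(1 - x)^(h_i)].  The operators
   [(1 - x) d/dx + c] commute with multiplication by [(1 - x)^h] up to
   replacing [c] by [c - h]; a suitable product of them annihilates the
   sequences attached to one class of exponents modulo the integers and is
   injective on the others, so the classes are removed one at a time by
   induction on the number of terms.  With two pairs of variables one separates
   the classes of [h] first and, inside one of them, the classes of [hbar]. *)

Definition eventually (P : nat -> Prop) : Prop :=
  exists N, forall n, (N <= n)%N -> P n.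

Lemma eventually_and (P Q : nat -> Prop) :
  eventually P -> eventually Q -> eventually (fun n => P n /\ Q n).
Proof.
move=> [M PM] [N QN]; exists (maxn M N) => n; rewrite geq_max => /andP[le_M le_N].
by split; [apply: PM | apply: QN].
Qed.

Lemma eventually_all (T : Type) (s : seq T) (P : T -> nat -> Prop) :
  (forall t, List.In t s -> eventually (P t)) ->
  eventually (fun n => forall t, List.In t s -> P t n).
Proof.
elim: s => [|t s IH] ev; first by exists 0%N.
have [N PN] := eventually_and (ev t (or_introl erefl))
  (IH (fun u su => ev u (or_intror su))).
by exists N => n le_Nn u [<-|su]; have [] := PN n le_Nn; auto.
Qed.

Lemma eventually_forall (I : finType) (P : I -> nat -> Prop) :
  (forall i, eventually (P i)) -> eventually (fun n => forall i, P i n).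
Proof.
move=> ev.
have [N PN] := @eventually_all _ (enum I) P (fun i (_ : List.In i (enum I)) => ev i).
exists N => n le_Nn i; apply: (PN n le_Nn).
have : i \in enum I by rewrite mem_enum.
by elim: (enum I) => //= j s IH; rewrite in_cons => /orP[/eqP ->|/IH]; auto.
Qed.

Section Char0.
Variables (K : fieldType) (W : lmodType K).
Hypothesis charK0 : [pchar K] =i pred0.

Lemma natrK_inj (m n : nat) : (m%:R : K) = n%:R -> m = n.
Proof.
wlog le_mn : m n / (m <= n)%N.
  by move=> wlog_le eq_mn; case: (leqP m n) => [/wlog_le|/ltnW /wlog_le] ->.
move=> eq_mn; apply/eqP; rewrite eqn_leq le_mn -subn_eq0 /=.
by rewrite -(pcharf0P K).1 // natrB // eq_mn subrr.
Qed.

Definition is_int (x : K) : bool :=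
  if excluded_middle_informative (exists z : int, x = z%:~R) then true else false.

Lemma is_intP (x : K) : reflect (exists z : int, x = z%:~R) (is_int x).
Proof. by rewrite /is_int; case: excluded_middle_informative => ?; constructor. Qed.

Lemma is_int_int (z : int) : is_int z%:~R.
Proof. by apply/is_intP; exists z. Qed.

Lemma is_int_nat (n : nat) : is_int n%:R.
Proof. exact: (is_int_int n). Qed.

Lemma is_int0 : is_int 0.
Proof. exact: (is_int_nat 0). Qed.

Lemma is_intB (x y : K) : is_int x -> is_int y -> is_int (x - y).
Proof. by move=> /is_intP[a ->] /is_intP[b ->]; rewrite -rmorphB is_int_int. Qed.

Lemma int_window (z : int) :
  eventually (fun M => exists2 w : nat, (w <= M.*2)%N & (z%:~R : K) = w%:R - M%:R).
Proof.
exists `|z|%N => M le_zM; exists (absz (z + M%:Z)); first lia.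
have -> : ((absz (z + M%:Z))%:R : K) = (z + M%:Z)%:~R.
  by rewrite -[z + M%:Z in RHS]gez0_abs; [|lia].
by rewrite rmorphD /= addrK.
Qed.

(* The coefficient of z^(h-k) w^k in (z - w)^h. *)
Definition sbinom (h : K) (k : nat) : K := (-1) ^+ k * binomK h k.

Lemma sbinom0 (h : K) : sbinom h 0 = 1.
Proof. by rewrite /sbinom /binomK big_ord0 fact0 divr1 mulr1. Qed.

Lemma sbinomS (h : K) (k : nat) :
  k.+1%:R * sbinom h k.+1 = (k%:R - h) * sbinom h k.
Proof.
rewrite /sbinom /binomK big_ord_recr /= factS natrM invfM exprS.
by field; rewrite (addrC 1) natr1 !(pcharf0P K).1 // -lt0n fact_gt0.
Qed.

Lemma sbinom0S (k : nat) : sbinom 0 k.+1 = 0.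
Proof. by rewrite /sbinom /binomK big_ord_recl /= subrr !mul0r mulr0. Qed.

Definition conv (u : nat -> K) (f : nat -> W) (n : nat) : W :=
  \sum_(k < n.+1) u k *: f (n - k)%N.

(* On generating functions [conv (sbinom h)] multiplies by [(1 - x)^h] and
   [diffop1 l] is [(1 - x) d/dx + l], so [diffop1_conv] is the Leibniz rule. *)
Definition diffop1 (l : K) (f : nat -> W) (n : nat) : W :=
  n.+1%:R *: f n.+1 - n%:R *: f n + l *: f n.

Lemma diffop1_conv (c h : K) (f : nat -> W) (n : nat) :
  diffop1 c (conv (sbinom h) f) n = conv (sbinom h) (diffop1 (c - h) f) n.
Proof.
set u := sbinom h.
have top : n.+1%:R *: conv u f n.+1 =
    \sum_(k < n.+1) ((k%:R - h) * u k) *: f (n - k)%N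
  + \sum_(k < n.+1) ((n - k).+1%:R * u k) *: f (n - k).+1.
  rewrite /conv scaler_sumr.
  under eq_bigr => k _.
    have -> : (n.+1%:R : K) = k%:R + (n.+1 - k)%:R by rewrite -natrD subnKC // -ltnS.
    rewrite scalerA mulrDl scalerDl.
  over.
  rewrite big_split /=; congr (_ + _).
    rewrite big_ord_recl mul0r scale0r add0r; apply: eq_bigr => k _.
    by rewrite subSS sbinomS.
  rewrite big_ord_recr /= subnn mul0r scale0r addr0.
  by apply: eq_big => // k _; rewrite subSn // -ltnS.
rewrite /diffop1 top /conv !scaler_sumr -big_split -sumrB -big_split /=.
apply: eq_big => // k _.
have -> : (n%:R : K) = k%:R + (n - k)%:R by rewrite -natrD subnKC // -ltnS.
rewrite scalerDr scalerBr !scalerA !(addrAC _ (_ *: f (n - k).+1)).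
rewrite -[RHS]addrA [RHS]addrC -scalerBl -scalerDl -scaleNr -scalerDl.
by congr (_ *: _ + _ *: _); ring.
Qed.

Lemma conv_sbinom_eq0 (h : K) (f : nat -> W) :
  (forall n, conv (sbinom h) f n = 0) -> forall n, f n = 0.
Proof.
move=> conv0; elim/ltn_ind => n IH; rewrite -(conv0 n) /conv big_ord_recl.
rewrite sbinom0 scale1r subn0 big1 ?addr0 // => k _.
by rewrite IH ?scaler0 // subnSK // leq_subr.
Qed.

Lemma conv_sbinom0 (f : nat -> W) (n : nat) : conv (sbinom 0) f n = f n.
Proof.
rewrite /conv big_ord_recl sbinom0 scale1r subn0 big1 ?addr0 // => k _.
by rewrite sbinom0S scale0r.
Qed.

Lemma diffop1_conv_comm (l : K) (u : nat -> K) (p : nat -> nat -> W) (n m : nat) :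
  diffop1 l (fun n' => conv u (p n') m) n = conv u (fun m' => diffop1 l (p ^~ m') n) m.
Proof.
rewrite /diffop1 /conv !scaler_sumr -sumrB -big_split; apply: eq_bigr => k _ /=.
by rewrite scalerDr scalerBr !scalerA ![_ * u k]mulrC.
Qed.

Definition conv2 (h hb : K) (p : nat -> nat -> W) (n m : nat) : W :=
  conv (sbinom h) (fun n' => conv (sbinom hb) (p n') m) n.

Definition diffop (l : K) (p : nat -> nat -> W) (n m : nat) : W := diffop1 l (p ^~ m) n.

Lemma conv2_transpose (h hb : K) (p : nat -> nat -> W) (n m : nat) :
  conv2 h hb p n m = conv2 hb h (fun m' n' => p n' m') m n.
Proof.
rewrite /conv2 /conv; under eq_bigr do rewrite scaler_sumr.
rewrite exchange_big; apply: eq_bigr => l _; rewrite scaler_sumr.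
by apply: eq_bigr => k _; rewrite !scalerA mulrC.
Qed.

Lemma conv2_eq0 (h hb : K) (p : nat -> nat -> W) :
  (forall n m, conv2 h hb p n m = 0) -> forall n m, p n m = 0.
Proof.
move=> conv0 n; apply: (@conv_sbinom_eq0 hb) => m.
exact: (@conv_sbinom_eq0 h _ (conv0 ^~ m)).
Qed.

Lemma conv2_0 (h hb : K) (p : nat -> nat -> W) :
  (forall n m, p n m = 0) -> forall n m, conv2 h hb p n m = 0.
Proof.
move=> p0 n m; rewrite /conv2 /conv big1 // => k _.
by rewrite big1 ?scaler0 // => l _; rewrite p0 scaler0.
Qed.

Lemma diffop_conv2 (c h hb : K) (p : nat -> nat -> W) (n m : nat) :
  diffop c (conv2 h hb p) n m = conv2 h hb (diffop (c - h) p) n m.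
Proof.
rewrite /diffop /conv2 [LHS]diffop1_conv; apply: eq_bigr => k _.
by rewrite diffop1_conv_comm.
Qed.

Definition fin_supp (p : nat -> nat -> W) : Prop :=
  eventually (fun n => forall m, p n m = 0) /\ eventually (fun m => forall n, p n m = 0).

Lemma diffop_rows_vanish (l : K) (p : nat -> nat -> W) (N : nat) :
  (forall n, (N <= n)%N -> forall m, p n m = 0) ->
  forall n, (N <= n)%N -> forall m, diffop l p n m = 0.
Proof.
by move=> p0 n le_Nn m; rewrite /diffop /diffop1 !p0 ?scaler0 ?subrr ?addr0 // leqW.
Qed.

Lemma diffop_col_vanish (l : K) (p : nat -> nat -> W) (m : nat) :
  (forall n, p n m = 0) -> forall n, diffop l p n m = 0.
Proof. by move=> p0 n; rewrite /diffop /diffop1 !p0 !scaler0 subrr addr0. Qed.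

(* On the top row [N] of the support, [diffop l p N = (l - N) *: p N]. *)
Lemma diffop_nat_rows (N : nat) (p : nat -> nat -> W) :
  (forall n, (N < n)%N -> forall m, p n m = 0) ->
  forall n, (N <= n)%N -> forall m, diffop N%:R p n m = 0.
Proof.
move=> p0 n; rewrite leq_eqVlt => /orP[/eqP <-|lt_Nn] m; rewrite /diffop /diffop1.
  by rewrite p0 // scaler0 sub0r addNr.
by rewrite !p0 ?scaler0 ?subrr ?addr0 // ltnW.
Qed.

Lemma diffop_inj (l : K) (p : nat -> nat -> W) :
  ~~ is_int l -> eventually (fun n => forall m, p n m = 0) ->
  (forall n m, diffop l p n m = 0) -> forall n m, p n m = 0.
Proof.
move=> l_nint [N]; elim: N => [|N IH] pN diffop0; first by move=> n; apply: pN.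
apply: IH => // n; rewrite leq_eqVlt => /orP[/eqP <- m|]; last exact: pN.
move: (diffop0 N m); rewrite /diffop /diffop1 pN // scaler0 sub0r -scaleNr -scalerDl.
move/eqP; rewrite scaler_eq0 addrC subr_eq0 => /orP[/eqP l_N|/eqP //].
by move: l_nint; rewrite l_N is_int_nat.
Qed.

Fixpoint diffop_prod (l : K) (B : nat) (p : nat -> nat -> W) : nat -> nat -> W :=
  if B is B'.+1 then diffop_prod l B' (diffop (l + B'%:R) p) else p.

Lemma fin_supp_diffop_prod (l : K) (B : nat) (p : nat -> nat -> W) :
  fin_supp p -> fin_supp (diffop_prod l B p).
Proof.
elim: B p => // B IH p [[N rows0] [M cols0]]; apply: IH; split.
  by exists N; apply: diffop_rows_vanish.
by exists M => m le_Mm; apply: diffop_col_vanish; apply: cols0.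
Qed.

Lemma diffop_prod_eq0 (w B : nat) (p : nat -> nat -> W) :
  (forall n, (B - w <= n)%N -> forall m, p n m = 0) ->
  forall n m, diffop_prod (- w%:R) B p n m = 0.
Proof.
elim: B p => [|B IH] p p0 /=; first by move=> n; apply: p0.
apply: IH; case: (leqP w B) => [le_wB|lt_Bw].
  rewrite addrC -natrB //; apply: diffop_nat_rows => n lt_n.
  by apply: p0; rewrite subSn.
move=> n _; apply: (diffop_rows_vanish _ _ (leq0n n)) => k _; apply: p0.
by move: lt_Bw; rewrite -subn_eq0 => /eqP ->.
Qed.

Lemma diffop_prod_inj (l : K) (B : nat) (p : nat -> nat -> W) :
  ~~ is_int l -> eventually (fun n => forall m, p n m = 0) ->
  (forall n m, diffop_prod l B p n m = 0) -> forall n m, p n m = 0.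
Proof.
move=> l_nint; elim: B p => // B IH p [N rows0] /= /IH prod0.
apply: (@diffop_inj (l + B%:R)).
- by apply: contra l_nint => /is_intB /(_ (is_int_nat B)); rewrite addrK.
- by exists N.
- by apply: prod0; exists N; apply: diffop_rows_vanish.
Qed.

Section Family.
Variables (I : finType) (h hb : I -> K).

Lemma sum_diffop_conv2 (S : {set I}) (p : I -> nat -> nat -> W) (c : K) :
  (forall n m, \sum_(i in S) conv2 (h i) (hb i) (p i) n m = 0) ->
  forall n m, \sum_(i in S) conv2 (h i) (hb i) (diffop (c - h i) (p i)) n m = 0.
Proof.
move=> sum0 n m; under eq_bigr do rewrite -diffop_conv2.
by rewrite /diffop /diffop1 big_split sumrB -!scaler_sumr /= !sum0 !scaler0 subrr addr0.
Qed.

Lemma sum_diffop_prod_conv2 (S : {set I}) (p : I -> nat -> nat -> W) (c : K) (B : nat) :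
  (forall n m, \sum_(i in S) conv2 (h i) (hb i) (p i) n m = 0) ->
  forall n m, \sum_(i in S) conv2 (h i) (hb i) (diffop_prod (c - h i) B (p i)) n m = 0.
Proof.
elim: B p => // B IH p sum0 /=; apply: IH => n m.
rewrite -[RHS](sum_diffop_conv2 (c + B%:R) sum0 n m).
by apply: eq_bigr => i _; rewrite addrAC.
Qed.

(* For [c] below the class of [h r] modulo the integers and [B] large,
   [diffop_prod (c - h i) B] annihilates every member of that class and is
   injective on all the other members. *)
Lemma drop_class (S : {set I}) (p : I -> nat -> nat -> W) (r : I) :
  {in S, forall i, fin_supp (p i)} ->
  (forall n m, \sum_(i in S) conv2 (h i) (hb i) (p i) n m = 0) ->
  exists q : I -> nat -> nat -> W,
    [/\ {in S, forall i, fin_supp (q i)},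
        forall n m, \sum_(i in [set i in S | ~~ is_int (h i - h r)])
                      conv2 (h i) (hb i) (q i) n m = 0 &
        {in S, forall i, ~~ is_int (h i - h r) ->
           (forall n m, q i n m = 0) -> forall n m, p i n m = 0}].
Proof.
move=> supp sum0.
have [M /(_ M (leqnn M)) window] : eventually (fun M => forall i, is_int (h i - h r) ->
    exists2 w : nat, (w <= M.*2)%N & h i = h r - M%:R + w%:R).
  apply: eventually_forall => i.
  have [/is_intP[z hz]|_] := boolP (is_int (h i - h r)); last by exists 0%N.
  have [M0 win] := int_window z; exists M0 => M /win[w le_w ez] _.
  by exists w => //; rewrite -[h i](subrK (h r)) hz ez; ring.
have [N /(_ N (leqnn N)) rows] :
    eventually (fun N => {in S, forall i n, (N <= n)%N -> forall m, p i n m = 0}).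
  apply: eventually_forall => i.
  have [/supp[[N0 rows0] _]|iS] := boolP (i \in S); last by exists 0%N => ? _ /negP.
  by exists N0 => N le_N _ n le_n; apply: rows0; apply: leq_trans le_n.
exists (fun i => diffop_prod (h r - M%:R - h i) (N + M.*2) (p i)); split.
- by move=> i iS; apply/fin_supp_diffop_prod/supp.
- move=> n m; rewrite -[RHS](sum_diffop_prod_conv2 (h r - M%:R) (N + M.*2) sum0 n m).
  rewrite [RHS](bigID (fun i => is_int (h i - h r))) /= [X in _ = X + _]big1 ?add0r.
    by apply: eq_bigl => i; rewrite inE.
  move=> i /andP[iS /(window i)[w le_w ->]].
  rewrite (_ : h r - M%:R - _ = - w%:R); last by ring.
  apply: conv2_0; apply: diffop_prod_eq0 => k le_k; apply: rows => //.
  by apply: leq_trans le_k; lia.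
- move=> i iS i_nint; apply: diffop_prod_inj; last by have [] := supp i iS.
  apply: contra i_nint => /(is_intB (is_int_nat 0)) /is_intB /(_ (is_int_nat M)).
  by rewrite (_ : _ - _ = h i - h r) //; ring.
Qed.

End Family.

Lemma sum_conv2_eq0_in (I : finType) (S : {set I}) (h hb : I -> K)
    (p : I -> nat -> nat -> W) :
  {in S &, forall i j, i != j -> ~~ is_int (h i - h j) || ~~ is_int (hb i - hb j)} ->
  {in S, forall i, fin_supp (p i)} ->
  (forall n m, \sum_(i in S) conv2 (h i) (hb i) (p i) n m = 0) ->
  {in S, forall i n m, p i n m = 0}.
Proof.
move: {2}#|S|.+1 (ltnSn #|S|) => bound; elim: bound S h hb p => // bound IH S h hb p.
rewrite ltnS => lt_S apart supp sum0 r rS.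
have IHr (T : {set I}) (h' hb' : I -> K) (q : I -> nat -> nat -> W) :
    T \subset S -> r \notin T ->
    {in S &, forall i j, i != j -> ~~ is_int (h' i - h' j) || ~~ is_int (hb' i - hb' j)} ->
    {in T, forall i, fin_supp (q i)} ->
    (forall n m, \sum_(i in T) conv2 (h' i) (hb' i) (q i) n m = 0) ->
    {in T, forall i n m, q i n m = 0}.
  move=> sub_TS rT apart' suppq sumq; apply: IH suppq sumq.
    by apply: leq_trans _ lt_S; apply/proper_card/properP; split=> //; exists r.
  by apply: (sub_in2 _ apart'); apply/subsetP.
have [q [qsupp qsum qinj]] := drop_class r supp sum0.
have off_class : {in S, forall j, ~~ is_int (h j - h r) -> forall n m, p j n m = 0}.
  move=> j jS j_nint; apply: qinj => //; apply: (IHr _ h hb q _ _ apart _ qsum).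
  - by apply/subsetP => i; rewrite inE => /andP[].
  - by rewrite inE subrr is_int0 andbF.
  - by move=> i; rewrite inE => /andP[iS _]; apply: qsupp.
  - by rewrite inE jS.
pose C := [set i in S | is_int (h i - h r)].
have sumC n m : \sum_(i in C) conv2 (h i) (hb i) (p i) n m = 0.
  rewrite -[RHS](sum0 n m) [RHS](bigID (fun i => is_int (h i - h r))) /=.
  rewrite [X in _ = _ + X]big1 ?addr0; first by apply: eq_bigl => i; rewrite inE.
  by move=> i /andP[iS i_nint]; apply: conv2_0; apply: off_class.
have rC : r \in C by rewrite inE rS subrr is_int0.
have suppT : {in C, forall i, fin_supp (fun m n => p i n m)}.
  by move=> i; rewrite inE => /andP[/supp[]].
have sumT m n : \sum_(i in C) conv2 (hb i) (h i) (fun m n => p i n m) m n = 0.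
  by rewrite -[RHS](sumC n m); apply: eq_bigr => i _; rewrite conv2_transpose.
have [q' [q'supp q'sum q'inj]] := drop_class r suppT sumT.
have in_class : {in C, forall j, j != r -> forall n m, p j n m = 0}.
  move=> j jC jr; move: (jC); rewrite inE => /andP[jS j_int].
  have hb_nint : ~~ is_int (hb j - hb r) by move: (apart j r jS rS jr); rewrite j_int.
  move=> n m; apply: (q'inj j jC hb_nint) => {}m {}n.
  apply: (IHr _ hb h q' _ _ _ _ q'sum).
  - by apply/subsetP => i; rewrite !inE => /andP[/andP[]].
  - by rewrite inE subrr is_int0 andbF.
  - by move=> i k iS kS ik; rewrite orbC apart.
  - by move=> i; rewrite inE => /andP[iC _]; apply: q'supp.
  - by rewrite inE jC hb_nint.
apply: (@conv2_eq0 (h r) (hb r)) => n m.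
rewrite -[RHS](sumC n m) (bigD1 r rC) /= [X in _ = _ + X]big1 ?addr0 //.
by move=> j /andP[jC jr]; apply: conv2_0; apply: in_class.
Qed.

Lemma sum_conv2_eq0 (I : finType) (h hb : I -> K) (p : I -> nat -> nat -> W) :
  (forall i j, i != j -> ~~ is_int (h i - h j) || ~~ is_int (hb i - hb j)) ->
  (forall i, fin_supp (p i)) ->
  (forall n m, \sum_i conv2 (h i) (hb i) (p i) n m = 0) ->
  forall i n m, p i n m = 0.
Proof.
move=> apart supp sum0 i; apply: (@sum_conv2_eq0_in _ setT) => //.
- by move=> j k _ _; apply: apart.
- by move=> n m; rewrite -[RHS](sum0 n m); apply: eq_bigl => j; rewrite inE.
Qed.

(* A one-variable family is the special case [hb = 0] of a two-variable one,
   the second variable being confined to [m = 0]. *)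
Lemma sum_conv_eq0 (I : finType) (h : I -> K) (p : I -> nat -> W) :
  (forall i j, i != j -> ~~ is_int (h i - h j)) ->
  (forall i, eventually (fun n => p i n = 0)) ->
  (forall n, \sum_i conv (sbinom (h i)) (p i) n = 0) ->
  forall i n, p i n = 0.
Proof.
move=> apart supp sum0 i n.
pose p2 i n m := if m is 0 then p i n else 0.
have conv2_p2 j n' m : conv2 (h j) 0 (p2 j) n' m =
    if m is 0 then conv (sbinom (h j)) (p j) n' else 0.
  rewrite /conv2 {1}/conv; under eq_bigr do rewrite conv_sbinom0.
  by case: m => // m; rewrite big1 // => k _; rewrite scaler0.
apply: (@sum_conv2_eq0 _ h (fun=> 0) p2 _ _ _ i n 0).
- by move=> j k jk; rewrite apart.
- move=> j; split; last by exists 1%N => -[|m].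
  by have [N pN] := supp j; exists N => n' le_n [|m] //=; apply: pN.
- move=> n' [|m]; under eq_bigr do rewrite conv2_p2; first exact: sum0.
  by rewrite big1.
Qed.

Lemma fsum_fin (u : nat -> W) (N : nat) :
  (forall k, (N <= k)%N -> u k = 0) -> fsum u = \sum_(k < N) u k.
Proof.
move=> u0.
have stable M : (N <= M)%N -> \sum_(k < M) u k = \sum_(k < N) u k.
  move=> le_NM; rewrite -!(big_mkord xpredT) (big_cat_nat (leq0n N) le_NM) /=.
  rewrite [X in _ + X]big1_seq ?addr0 // => k /andP[_].
  by rewrite mem_index_iota => /andP[/u0].
have [N' stable'] := @epsilon_spec _ (inhabits 0) (eventually_stable u)
  (ex_intro _ _ (ex_intro _ N stable)).
by rewrite /fsum -(stable' (maxn N N')) ?leq_maxr // stable // leq_maxl.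
Qed.

Lemma sum_In_eq0 (T : Type) (s : seq T) (F : T -> W) :
  (forall t, List.In t s -> F t = 0) -> \sum_(t <- s) F t = 0.
Proof.
elim: s => [|t s IH] F0; first by rewrite big_nil.
by rewrite big_cons F0 ?IH ?addr0 //; [move=> u su; apply: F0; right | left].
Qed.

Lemma eventually_not_shift (alpha x0 : K) :
  eventually (fun k => ~ in_shift alpha (x0 - k%:R)).
Proof.
have [[k0 [n0 e0]]|none] := classic (exists k0 n0 : nat, x0 - k0%:R = alpha + n0%:R);
  last by exists 0%N => k _ [n e]; apply: none; exists k, n.
exists (k0 + n0).+1 => k lt_k [n e].
have : ((k + n)%:R : K) = (k0 + n0)%:R.
  apply/eqP; rewrite -subr_eq0 !natrD; apply/eqP.
  transitivity ((x0 - k0%:R - (alpha + n0%:R)) - (x0 - k%:R - (alpha + n%:R))); first ring.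
  by rewrite e e0 !subrr.
by move/natrK_inj; lia.
Qed.

Lemma vertex_series2_vanish (c : K -> K -> W) (x0 : K) : vertex_series2 c ->
  eventually (fun k => forall a b, a = x0 - k%:R \/ b = x0 - k%:R -> c a b = 0).
Proof.
move=> [s [shifted c_sum]].
have [N avoid] := @eventually_all _ s _ (fun t _ =>
  eventually_and (eventually_not_shift t.1.1 x0) (eventually_not_shift t.1.2 x0)).
exists N => k le_k a b ab; rewrite c_sum; apply: sum_In_eq0 => t st.
have [/eqP//|/eqP nz] := eqVneq (t.2 a b) 0.
have [sa sb] := shifted t st a b nz; have [na nb] := avoid k le_k t st.
by case: ab => e; exfalso; [apply: na | apply: nb]; rewrite -e.
Qed.

Lemma vertex_series4_vanish (c : K -> K -> K -> K -> W) (x0 : K) : vertex_series4 c ->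
  eventually (fun k => forall a a' b b',
    [\/ a = x0 - k%:R, a' = x0 - k%:R, b = x0 - k%:R | b' = x0 - k%:R] ->
    c a a' b b' = 0).
Proof.
move=> [s [shifted c_sum]].
have [N avoid] := @eventually_all _ s _ (fun t _ =>
  eventually_and (eventually_and (eventually_not_shift t.1.1.1.1 x0)
                                 (eventually_not_shift t.1.1.1.2 x0))
                 (eventually_and (eventually_not_shift t.1.1.2 x0)
                                 (eventually_not_shift t.1.2 x0))).
exists N => k le_k a a' b b' ab; rewrite c_sum; apply: sum_In_eq0 => t st.
have [/eqP//|/eqP nz] := eqVneq (t.2 a a' b b') 0.
have [s1 s2 s3 s4] := shifted t st a a' b b' nz.
have [[n1 n2] [n3 n4]] := avoid k le_k t st.
by case: ab => e; exfalso; [apply: n1 | apply: n2 | apply: n3 | apply: n4]; rewrite -e.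
Qed.

Lemma mul_zw_diag (h : K) (c : K -> K -> W) (x beta : K) :
  (forall a k, c a (beta - k.+1%:R) = 0) ->
  forall n, conv (sbinom h) (fun n' => c (x - h - n'%:R) (beta + n'%:R)) n
            = mul_zw h c (x - n%:R) (beta + n%:R).
Proof.
move=> below n; rewrite /mul_zw (fsum_fin (N := n.+1)) => [|k lt_nk].
  apply: eq_bigr => k _; rewrite /sbinom natrB ?leq_ord //.
  by congr (_ *: c _ _); ring.
rewrite (_ : beta + n%:R - k%:R = beta - (k - n.+1).+1%:R) ?below ?scaler0 //.
by rewrite subnSK // natrB 1?ltnW //; ring.
Qed.

Lemma mul_field_diag (h hb : K) (c : K -> K -> K -> K -> {linear W -> W}) (v : W)
    (x x' beta beta' : K) :
  (forall a a' b' k, c a a' (beta - k.+1%:R) b' v = 0) ->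
  (forall a a' b k, c a a' b (beta' - k.+1%:R) v = 0) ->
  forall n m, conv2 h hb (fun n' m' =>
      c (x - h - n'%:R) (x' - hb - m'%:R) (beta + n'%:R) (beta' + m'%:R) v) n m
    = mul_field_at h hb c v (x - n%:R) (x' - m%:R) (beta + n%:R) (beta' + m%:R).
Proof.
move=> below below' n m.
have shift (y : K) (k j : nat) : (j < k)%N -> y + j%:R - k%:R = y - (k - j.+1).+1%:R.
  by move=> lt_jk; rewrite subnSK // natrB 1?ltnW //; ring.
rewrite /mul_field_at (fsum_fin (N := n.+1)) => [|k lt_nk]; last first.
  by rewrite (fsum_fin (N := 0)) ?big_ord0 // => l _; rewrite (shift beta) // below scaler0.
apply: eq_bigr => k _; rewrite (fsum_fin (N := m.+1)) => [|l lt_ml]; last first.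
  by rewrite (shift beta') // below' scaler0.
rewrite scaler_sumr; apply: eq_bigr => l _; rewrite scalerA /sbinom !natrB ?leq_ord //.
by congr (_ *: c _ _ _ _ v); ring.
Qed.

Section Diagonal.
Variable I : finType.

Lemma vertex2_diagonal (c : I -> K -> K -> W) (h : I -> K) (i0 : I) (a0 b0 : K) :
  (forall i, vertex_series2 (c i)) ->
  exists (p : I -> nat -> W) (N : nat),
    [/\ forall i, eventually (fun n => p i n = 0),
        forall n, exists a b, forall i,
          conv (sbinom (h i)) (p i) n = mul_zw (h i) (c i) a b &
        c i0 a0 b0 = p i0 N].
Proof.
move=> vs; have [N below] := eventually_forall (fun i => vertex_series2_vanish b0 (vs i)).
pose beta := b0 - N%:R; pose x := a0 + b0 + h i0 - beta.
exists (fun i n => c i (x - h i - n%:R) (beta + n%:R)), N; split.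
- move=> i; have [M vanish] := vertex_series2_vanish (x - h i) (vs i).
  by exists M => n le_Mn; apply: vanish le_Mn _ _ _; left.
- move=> n; exists (x - n%:R), (beta + n%:R) => i; apply: mul_zw_diag => a k.
  apply: (below (N + k.+1)%N (leq_addr _ _)); right.
  by rewrite natrD opprD addrA.
- by rewrite /x /beta; congr (c i0 _ _); ring.
Qed.

Lemma field_diagonal (c : I -> K -> K -> K -> K -> {linear W -> W}) (h hb : I -> K)
    (v : W) (i0 : I) (a0 a0' b0 b0' : K) :
  (forall i, is_field (c i)) ->
  exists (p : I -> nat -> nat -> W) (N N' : nat),
    [/\ forall i, fin_supp (p i),
        forall n m, exists a a' b b', forall i,
          conv2 (h i) (hb i) (p i) n m = mul_field_at (h i) (hb i) (c i) v a a' b b' &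
        c i0 a0 a0' b0 b0' v = p i0 N N'].
Proof.
move=> fields; pose vanish x0 i := vertex_series4_vanish x0 (fields i v).
have [N below] := eventually_forall (vanish b0).
have [N' below'] := eventually_forall (vanish b0').
pose beta := b0 - N%:R; pose x := a0 + b0 + h i0 - beta.
pose beta' := b0' - N'%:R; pose x' := a0' + b0' + hb i0 - beta'.
exists (fun i n m =>
  c i (x - h i - n%:R) (x' - hb i - m%:R) (beta + n%:R) (beta' + m%:R) v), N, N'.
split.
- move=> i; have [M vanM] := vanish (x - h i) i; have [M' vanM'] := vanish (x' - hb i) i.
  by split; [exists M => n le_n m | exists M' => m le_m n];
    [apply: vanM le_n _ _ _ _ _; apply: Or41 | apply: vanM' le_m _ _ _ _ _; apply: Or42].
- move=> n m; exists (x - n%:R), (x' - m%:R), (beta + n%:R), (beta' + m%:R) => i.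
  apply: mul_field_diag => a a' b k.
    apply: (below (N + k.+1)%N (leq_addr _ _)); apply: Or43.
    by rewrite natrD opprD addrA.
  apply: (below' (N' + k.+1)%N (leq_addr _ _)); apply: Or44.
  by rewrite natrD opprD addrA.
- by rewrite /x /x' /beta /beta'; congr (c i0 _ _ _ _ v); ring.
Qed.

End Diagonal.

End Char0.

Theorem mainTheorem8 (K : fieldType) (charK0 : [pchar K] =i pred0) :
  (forall (W : lmodType K) (r : nat) (c : 'I_r -> K -> K -> W) (h : 'I_r -> K),
     (forall i, vertex_series2 (c i)) ->
     (forall i j, i != j -> ~ exists n : int, h i - h j = n%:~R) ->
     (forall a b, \sum_(i < r) mul_zw (h i) (c i) a b = 0) ->
     forall i a b, c i a b = 0)
  /\
  (forall (V : lmodType K) (r : nat)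
          (c : 'I_r -> K -> K -> K -> K -> {linear V -> V})
          (h hb : 'I_r -> K),
     (forall i, is_field (c i)) ->
     (forall i j, i != j ->
        ~ exists n m : int, h i - h j = n%:~R /\ hb i - hb j = m%:~R) ->
     (forall (v : V) a a' b b',
        \sum_(i < r) mul_field_at (h i) (hb i) (c i) v a a' b b' = 0) ->
     forall i a a' b b' (v : V), c i a a' b b' v = 0).
Proof.
split.
  move=> W r c h vs apart sum0 i0 a0 b0.
  have [p [N [supp diag ->]]] := vertex2_diagonal charK0 h i0 a0 b0 vs.
  apply: (sum_conv_eq0 (h := h) charK0 _ supp) => [i j /apart ij|n].
    by apply/negP => /is_intP.
  have [a [b diag_ab]] := diag n.
  by rewrite -[RHS](sum0 a b); apply: eq_bigr => i _.
move=> V r c h hb fields apart sum0 i0 a0 a0' b0 b0' v.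
have [p [N [N' [supp diag ->]]]] := field_diagonal charK0 h hb v i0 a0 a0' b0 b0' fields.
apply: (sum_conv2_eq0 (h := h) (hb := hb) charK0 _ supp) => [i j /apart ij|n m].
  rewrite -negb_and; apply/negP => /andP[/is_intP[z ez] /is_intP[z' ez']].
  by apply: ij; exists z, z'.
have [a [a' [b [b' diag_ab]]]] := diag n m.
by rewrite -[RHS](sum0 v a a' b b'); apply: eq_bigr => i _.
Qed.
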